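(* Let $\varphi\in\Phi_w(\Omega)$ and $f\in L^2(\Omega)$. Let $u\in L^2(\Omega)$, let $(u_i)\subset L^2(\Omega)$ converge to $u$ in $L^2(\Omega)$ and let $p_i\to1^+$. Then $F(u)\le\liminf_{i\to\infty}F_{p_i}(u_i)$.
   Context: $\Omega\subset\mathbb{R}^n$ is a bounded domain. A function $g$ on $(0,\infty)$ is $L$-almost increasing ($L\ge1$) if $g(s)\le Lg(t)$ whenever $0<s\le t$. A weak $\Phi$-function, $\varphi\in\Phi_w(\Omega)$, is $\varphi:\Omega\times[0,\infty)\to[0,\infty]$ such that for a.e. $x\in\Omega$: for every measurable $h:\Omega\to\mathbb{R}$, $y\mapsto\varphi(y,h(y))$ is measurable; $t\mapsto\varphi(x,t)$ is non-decreasing; $\varphi(x,0)=\lim_{t\to0^+}\varphi(x,t)=0$, $\lim_{t\to\infty}\varphi(x,t)=\infty$; $t\mapsto\varphi(x,t)/t$ is $L$-almost increasing on $(0,\infty)$ with $L$ independent of $x$. $\varphi^p(x,t):=\varphi(x,t)^p$. $\varrho_\varphi(u)=\int_\Omega\varphi(x,|u|)\,dx$; $\|u\|_\varphi=\inf\{\lambda>0:\varrho_\varphi(u/\lambda)\le1\}$, $\|v\|_\varphi=\||v|\|_\varphi$ for vector fields. $L^{1,\varphi}(\Omega)=\{u\in W^{1,1}(\Omega):\|u\|_{L^1(\Omega)}+\|\nabla u\|_\varphi<\infty\}$. For $p>1$, $F_p:L^2(\Omega)\to[0,\infty]$, $F_p(u)=\int_\Omega\varphi(x,|\nabla u|)^p+|u-f|^2\,dx$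 if $u\in L^{1,\varphi^p}(\Omega)\cap L^2(\Omega)$ and $+\infty$ otherwise; $F(u)=\inf\{\liminf_{i\to\infty}\int_\Omega\varphi(x,|\nabla v_i|)+|v_i-f|^2\,dx: v_i\in L^{1,\varphi}(\Omega)\cap L^2(\Omega),\ v_i\to u\text{ in }L^2(\Omega)\}$. *)

From HB Require Import structures.
From mathcomp Require Import all_boot all_order all_algebra.
From mathcomp Require Import all_classical all_reals all_analysis.
From mathcomp Require Import measurable_realfun.
Set Implicit Arguments. Unset Strict Implicit. Unset Printing Implicit Defensive.
Import Order.TTheory GRing.Theory Num.Theory.
Import numFieldNormedType.Exports.
Local Open Scope classical_set_scope.
Local Open Scope ring_scope.

Definition Rn (R : realType) (n : nat) :=
  g_sigma_algebraType (@open 'rV[R]_n).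

(* mu is Lebesgue measure on the Borel sets of R^n: it gives closed boxes
   their volume (this determines it uniquely on Borel sets). *)
Definition lebesgue_rV (R : realType) (n : nat)
  (mu : {measure set (Rn R n) -> \bar R}) : Prop :=
  forall a b : 'rV[R]_n, (forall i, a 0 i <= b 0 i) ->
    mu [set x : Rn R n | forall i, a 0 i <= (x : 'rV[R]_n) 0 i <= b 0 i]
    = (\prod_(i < n) (b 0 i - a 0 i))%:E.

Definition enorm (R : realType) (n : nat) (v : 'rV[R]_n) : R :=
  Num.sqrt (\sum_(j < n) v 0 j ^+ 2).

Definition eunit (R : realType) (n : nat) (j : 'I_n) : 'rV[R]_n := delta_mx 0 j.

Fixpoint iterD (R : realType) (n : nat) (vs : seq 'rV[R]_n)
  (f : 'rV[R]_n -> R) : 'rV[R]_n -> R :=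
  match vs with
  | [::] => f
  | v :: vs' => 'D_v (iterD vs' f)
  end.

Definition smooth (R : realType) (n : nat) (f : 'rV[R]_n -> R) : Prop :=
  (forall (vs : seq 'rV[R]_n) (v x : 'rV[R]_n), derivable (iterD vs f) x v) /\
  (forall vs : seq 'rV[R]_n, continuous (iterD vs f)).

Definition test_fun (R : realType) (n : nat) (Om : set 'rV[R]_n)
  (psi : 'rV[R]_n -> R) : Prop :=
  smooth psi /\ compact (closure [set x | psi x != 0]) /\
  closure [set x | psi x != 0] `<=` Om.

Definition weak_grad (R : realType) (n : nat)
  (mu : {measure set (Rn R n) -> \bar R}) (Om : set (Rn R n))
  (u : Rn R n -> R) (g : Rn R n -> 'rV[R]_n) : Prop :=
  (forall j : 'I_n, mu.-integrable Om (fun x => (g x 0 j)%:E)) /\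
  (forall (psi : 'rV[R]_n -> R) (j : 'I_n), test_fun (Om : set 'rV[R]_n) psi ->
    (\int[mu]_(x in Om) (u x * 'D_(@eunit R n j) psi x)%:E =
     - \int[mu]_(x in Om) (g x 0 j * psi x)%:E)%E).

Definition W11_grad (R : realType) (n : nat)
  (mu : {measure set (Rn R n) -> \bar R}) (Om : set (Rn R n))
  (u : Rn R n -> R) (g : Rn R n -> 'rV[R]_n) : Prop :=
  mu.-integrable Om (fun x => (u x)%:E) /\ weak_grad mu Om u g.

Definition L2 (R : realType) (n : nat)
  (mu : {measure set (Rn R n) -> \bar R}) (Om : set (Rn R n))
  (u : Rn R n -> R) : Prop :=
  measurable_fun Om u /\ (\int[mu]_(x in Om) ((u x) ^+ 2)%:E < +oo)%E.

Definition L2_cvg (R : realType) (n : nat)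
  (mu : {measure set (Rn R n) -> \bar R}) (Om : set (Rn R n))
  (us : nat -> Rn R n -> R) (u : Rn R n -> R) : Prop :=
  ((fun i => \int[mu]_(x in Om) ((us i x - u x) ^+ 2)%:E)%E @ \oo --> 0%E).

Definition modular (R : realType) (n : nat)
  (mu : {measure set (Rn R n) -> \bar R}) (Om : set (Rn R n))
  (phi : 'rV[R]_n -> R -> \bar R) (v : Rn R n -> 'rV[R]_n) : \bar R :=
  (\int[mu]_(x in Om) phi x (enorm (v x)))%E.

Definition lux_norm (R : realType) (n : nat)
  (mu : {measure set (Rn R n) -> \bar R}) (Om : set (Rn R n))
  (phi : 'rV[R]_n -> R -> \bar R) (v : Rn R n -> 'rV[R]_n) : \bar R :=
  ereal_inf [set lam%:E | lam in
    [set lam : R | 0 < lam /\ (modular mu Om phi (fun x => lam^-1 *: v x) <= 1)%E]].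

Definition weak_Phi (R : realType) (n : nat)
  (mu : {measure set (Rn R n) -> \bar R}) (Om : set (Rn R n))
  (phi : 'rV[R]_n -> R -> \bar R) : Prop :=
  (forall x t, Om x -> 0 <= t -> (0 <= phi x t)%E) /\
  (forall h : Rn R n -> R, measurable_fun Om h -> (forall y, Om y -> 0 <= h y) ->
     measurable_fun Om ((fun y => phi y (h y)) : Rn R n -> \bar R)) /\
  exists L : R, 1 <= L /\
  exists N : set (Rn R n), measurable N /\ mu N = 0%E /\
  forall x, Om x -> ~ N x ->
    [/\ (forall s t, 0 <= s -> s <= t -> (phi x s <= phi x t)%E),
        phi x 0 = 0%E,
        phi x t @[t --> 0^'+] --> 0%E,
        phi x t @[t --> +oo] --> +oo%E &
        (forall s t, 0 < s -> s <= t ->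
           ((s^-1)%:E * phi x s <= (L * t^-1)%:E * phi x t)%E)].

Definition phi_pow (R : realType) (n : nat) (phi : 'rV[R]_n -> R -> \bar R)
  (p : R) : 'rV[R]_n -> R -> \bar R :=
  fun x t => poweR (phi x t) p.

Definition L1psi_grad (R : realType) (n : nat)
  (mu : {measure set (Rn R n) -> \bar R}) (Om : set (Rn R n))
  (psi : 'rV[R]_n -> R -> \bar R) (u : Rn R n -> R) (g : Rn R n -> 'rV[R]_n) : Prop :=
  W11_grad mu Om u g /\ (lux_norm mu Om psi g < +oo)%E.

Definition L1psi (R : realType) (n : nat)
  (mu : {measure set (Rn R n) -> \bar R}) (Om : set (Rn R n))
  (psi : 'rV[R]_n -> R -> \bar R) (u : Rn R n -> R) : Prop :=
  exists g, L1psi_grad mu Om psi u g.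

(* E_psi(u) = int psi(x,|grad u|) + |u-f|^2 if u in L^{1,psi} cap L^2, +oo otherwise
   (the integral does not depend on the choice of the a.e.-determined weak
   gradient; the infimum over an empty set is +oo) *)
Definition Efun (R : realType) (n : nat)
  (mu : {measure set (Rn R n) -> \bar R}) (Om : set (Rn R n))
  (psi : 'rV[R]_n -> R -> \bar R) (f u : Rn R n -> R) : \bar R :=
  ereal_inf [set (\int[mu]_(x in Om) (psi x (enorm (g x)) + ((u x - f x) ^+ 2)%:E))%E
            | g in [set g | L1psi_grad mu Om psi u g /\ L2 mu Om u]].

Definition Fp (R : realType) (n : nat)
  (mu : {measure set (Rn R n) -> \bar R}) (Om : set (Rn R n))
  (phi : 'rV[R]_n -> R -> \bar R) (f : Rn R n -> R) (p : R) (u : Rn R n -> R) : \bar R :=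
  Efun mu Om (phi_pow phi p) f u.

Definition Frelax (R : realType) (n : nat)
  (mu : {measure set (Rn R n) -> \bar R}) (Om : set (Rn R n))
  (phi : 'rV[R]_n -> R -> \bar R) (f : Rn R n -> R) (u : Rn R n -> R) : \bar R :=
  ereal_inf [set limn_einf (fun i => Efun mu Om phi f (v i))
            | v in [set v : nat -> Rn R n -> R |
                     (forall i, L1psi mu Om phi (v i) /\ L2 mu Om (v i)) /\
                     L2_cvg mu Om v u]].

From HB Require Import structures.
From mathcomp Require Import all_boot all_order all_algebra.
From mathcomp Require Import all_classical all_reals all_analysis.
From mathcomp Require Import measurable_realfun.
From mathcomp Require Import ring.
Set Implicit Arguments. Unset Strict Implicit. Unset Printing Implicit Defensive.
Import Order.TTheory GRing.Theory Num.Theory.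
Import numFieldNormedType.Exports.
Local Open Scope classical_set_scope.
Local Open Scope ring_scope.

(* For t >= 0 and q >= 1 we have t <= t^q + (q - 1).  Applied to phi(x, |g x|) and
   integrated over Om, which has finite measure, this bounds the phi-energy of v by
   F_q(v) + (q - 1)|Om|.  Finiteness of the Luxemburg norm for phi^q also passes to phi,
   since almost increasingness gives phi(x, t/K) <= (L/K) phi(x, t) for K >= 1.  Hence,
   along a subsequence realising the (finite) lim inf of F_{p_i}(u_i), the u_i are
   admissible for the relaxation F(u), and their phi-energies exceed that lim inf by
   an error tending to 0 as p_i -> 1. *)

Lemma ler_powR_addBr (R : realType) (r q : R) : 0 <= r -> 1 <= q ->
  r <= r `^ q + (q - 1).
Proof.
move=> r0 q1; have q0 : 0 <= q - 1 by rewrite subr_ge0.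
have [r1|r1] := leP 1 r.
  by rewrite (le_trans (le1r_powR r1 q1)) // lerDl.
have [->|r_neq0] := eqVneq r 0; first by rewrite addr_ge0 // powR_ge0.
have r_gt0 : 0 < r by rewrite lt_neqAle eq_sym r_neq0.
rewrite -(mulr_powRB1 r0 (lt_le_trans ltr01 q1)) -lerBlDl.
(* [r - r r^(q-1) <= r (1-q) ln r <= q - 1], by [expR x >= 1 + x] and [- ln r <= 1/r] *)
have expR_bound : r - r * r `^ (q - 1) <= r * - ((q - 1) * ln r).
  rewrite /powR (negbTE r_neq0) -[X in X - _]mulr1 -mulrBr ler_wpM2l //.
  by rewrite lerBlDr -lerBlDl opprK expR_ge1Dx.
have ln_bound : - ln r <= r^-1.
  by rewrite -lnV ?posrE // ltW // ln_sublinear // invr_gt0.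
apply: le_trans expR_bound _.
rewrite mulrN mulrCA -mulrN -[leRHS]mulr1 ler_wpM2l // -mulrN.
by rewrite -(mulfV (lt0r_neq0 r_gt0)) ler_wpM2l // ltW.
Qed.

Lemma lee_poweR_addBr (R : realType) (a : \bar R) (q : R) : (0 <= a)%E -> 1 <= q ->
  (a <= poweR a q + (q - 1)%:E)%E.
Proof.
case: a => [r| |] //= r0 q1; first by rewrite -EFinD lee_fin ler_powR_addBr.
by rewrite gt_eqF ?(lt_le_trans ltr01 q1) // addye.
Qed.

Lemma integral_le_poweR_addBr d (T : measurableType d) (R : realType)
  (mu : {measure set T -> \bar R}) (D : set T) (h : T -> \bar R) (q : R) :
  measurable D -> 1 <= q -> measurable_fun D h -> (forall x, D x -> (0 <= h x)%E) ->
  (\int[mu]_(x in D) h x <= \int[mu]_(x in D) poweR (h x) q + (q - 1)%:E * mu D)%E.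
Proof.
move=> mD q1 mh h0; have q0 : 0 <= q - 1 by rewrite subr_ge0.
have mhq : measurable_fun D (fun x => poweR (h x) q).
  exact: measurableT_comp (measurable_poweR q) mh.
rewrite -(integral_cst mu mD) -ge0_integralD //; last by move=> x _; exact: poweR_ge0.
apply: ge0_le_integral => //.
- by apply: emeasurable_funD => //; exact: measurable_cst.
- by move=> x Dx; exact: lee_poweR_addBr (h0 x Dx) q1.
Qed.

Section euclidean_space.
Variables (R : realType) (n : nat).

Lemma measurable_open_Rn (A : set (Rn R n)) : open (A : set 'rV[R]_n) -> measurable A.
Proof. exact: sub_sigma_algebra. Qed.

Lemma measurable_closed_Rn (A : set (Rn R n)) : closed (A : set 'rV[R]_n) -> measurable A.
Proof.
move=> cA; rewrite -[A]setCK; apply: measurableC; apply: measurable_open_Rn.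
exact: closed_openC.
Qed.

Definition cube (M : R) : set 'rV[R]_n := [set v | forall i, - M <= v 0 i <= M].

Lemma closed_cube M : closed (cube M).
Proof.
apply: compact_closed; first exact: norm_hausdorff.
have -> : cube M = [set v : 'rV[R]_n | forall i, v ord0 i \in `[- M, M]].
  by apply/seteqP; split=> v /= h i; have := h i; rewrite in_itv.
exact: (@rV_compact _ _ (fun=> `[- M, M]%classic)) (fun=> @segment_compact _ _ _).
Qed.

Lemma bounded_set_subset_cube (A : set 'rV[R]_n) :
  bounded_set A -> exists2 M, 0 <= M & A `<=` cube M.
Proof.
move=> [M [Mreal normA_le]]; exists (`|M| + 1); first by rewrite addr_ge0.
move=> v /(normA_le (`|M| + 1)) v_le i; rewrite -ler_norml.
have /v_le : M < `|M| + 1 by rewrite (le_lt_trans (real_ler_norm Mreal)) // ltrDl.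
apply: le_trans; rewrite [leRHS]/Num.norm /= mx_normrE.
by apply/bigmax_geP; right; exists (ord0, i).
Qed.

Lemma lebesgue_rV_cube (mu : {measure set (Rn R n) -> \bar R}) M :
  lebesgue_rV mu -> 0 <= M -> mu (cube M) = ((M *+ 2) ^+ n)%:E.
Proof.
move=> leb M0; have := leb (const_mx (- M)) (const_mx M).
rewrite /cube; under eq_fun do under eq_forall do rewrite !mxE.
move=> ->; last by move=> i; rewrite !mxE (le_trans _ M0) // oppr_le0.
by under eq_bigr do rewrite !mxE opprK; rewrite prodr_const card_ord mulr2n.
Qed.

Lemma lebesgue_rV_bounded_lty (mu : {measure set (Rn R n) -> \bar R}) (A : set (Rn R n)) :
  lebesgue_rV mu -> measurable A -> bounded_set (A : set 'rV[R]_n) -> (mu A < +oo)%E.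
Proof.
move=> leb mA /bounded_set_subset_cube[M M0 sAM].
have cube_lty : (mu (cube M) < +oo)%E by rewrite (lebesgue_rV_cube leb M0) ltry.
apply: le_lt_trans cube_lty; apply: le_measure; rewrite ?inE //.
by apply: measurable_closed_Rn; exact: closed_cube.
Qed.

End euclidean_space.

Lemma enorm_ge0 (R : realType) n (v : 'rV[R]_n) : 0 <= enorm v.
Proof. exact: sqrtr_ge0. Qed.

Lemma enormZ (R : realType) n (k : R) (v : 'rV[R]_n) : enorm (k *: v) = `|k| * enorm v.
Proof.
rewrite /enorm (eq_bigr (fun j => k ^+ 2 * v 0 j ^+ 2)); last first.
  by move=> j _; rewrite mxE exprMn.
by rewrite -mulr_sumr sqrtrM ?sqr_ge0 // sqrtr_sqr.
Qed.

Lemma measurable_enorm d (T : measurableType d) (R : realType) n (D : set T)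
  (g : T -> 'rV[R]_n) :
  (forall j, measurable_fun D (fun x => g x 0 j)) ->
  measurable_fun D (fun x => enorm (g x)).
Proof.
move=> mg; apply: measurableT_comp (continuous_measurable_fun (@sqrt_continuous R)) _.
by apply: measurable_sum => j; apply: measurable_funX.
Qed.

Lemma almost_increasing_contract {R : realType} {ph : R -> \bar R} {L K t : R} :
  ph 0 = 0%E ->
  (forall s t, 0 < s -> s <= t -> ((s^-1)%:E * ph s <= (L * t^-1)%:E * ph t)%E) ->
  0 <= t -> 1 <= K -> (ph (K^-1 * t)%R <= (L / K)%:E * ph t)%E.
Proof.
move=> ph0 ph_ainc t0 K1; have K0 : 0 < K by rewrite (lt_le_trans ltr01).
have [->|t_neq0] := eqVneq t 0; first by rewrite mulr0 ph0 mule0.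
have t_gt0 : 0 < t by rewrite lt_neqAle eq_sym t_neq0.
have Kt_gt0 : 0 < K^-1 * t by rewrite mulr_gt0 // invr_gt0.
have Kt_le : K^-1 * t <= t by rewrite ler_pdivrMl // ler_peMl // ltW.
have := ph_ainc _ _ Kt_gt0 Kt_le; rewrite lee_pdivrMl // muleA -EFinM.
suff -> : K^-1 * t * (L * t^-1) = L / K by [].
by field; rewrite (lt0r_neq0 t_gt0) (lt0r_neq0 K0).
Qed.

Section weak_Phi_function.
Variables (R : realType) (n : nat) (mu : {measure set (Rn R n) -> \bar R}).
Variables (Om : set (Rn R n)) (phi : 'rV[R]_n -> R -> \bar R).
Hypotheses (mOm : measurable Om) (wPhi : weak_Phi mu Om phi).

Lemma weak_Phi_ge0 x t : Om x -> 0 <= t -> (0 <= phi x t)%E.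
Proof. by have [phi_ge0 _] := wPhi; exact: phi_ge0. Qed.

Lemma measurable_weak_Phi (h : Rn R n -> R) :
  measurable_fun Om h -> (forall y, Om y -> 0 <= h y) ->
  measurable_fun Om (fun y => phi y (h y)).
Proof. by have [_ [phi_meas _]] := wPhi; exact: phi_meas. Qed.

Lemma modular_integrand_ge0 (g : Rn R n -> 'rV[R]_n) x :
  Om x -> (0 <= phi x (enorm (g x)))%E.
Proof. by move=> Ox; apply: weak_Phi_ge0 => //; exact: enorm_ge0. Qed.

Lemma measurable_modular_integrand (g : Rn R n -> 'rV[R]_n) :
  measurable_fun Om (fun x => enorm (g x)) ->
  measurable_fun Om (fun x => phi x (enorm (g x))).
Proof. by move=> mg; apply: measurable_weak_Phi => // y _; exact: enorm_ge0. Qed.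

Lemma modular_contract : exists2 L, 0 <= L & forall (K : R) (g : Rn R n -> 'rV[R]_n),
  1 <= K -> measurable_fun Om (fun x => enorm (g x)) ->
  (modular mu Om phi (fun x => K^-1 *: g x)%R <= (L / K)%:E * modular mu Om phi g)%E.
Proof.
have [_ [_ [L [L1 [N [mN [N0 phi_ae]]]]]]] := wPhi.
have L0 : 0 <= L := le_trans ler01 L1.
exists L => // K g K1 mg.
have K0 : 0 < K := lt_le_trans ltr01 K1.
have LK0 : 0 <= L / K by rewrite divr_ge0 // ltW.
rewrite /modular -ge0_integralZl_EFin //; last 2 first.
- exact: modular_integrand_ge0.
- exact: measurable_modular_integrand mg.
rewrite [X in (X <= _)%E](eq_integral (fun x : Rn R n => phi x (K^-1 * enorm (g x)))); last first.
  by move=> x _; rewrite enormZ ger0_norm // invr_ge0 ltW.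
have Kg_ge0 x : 0 <= K^-1 * enorm (g x).
  by apply: mulr_ge0; [rewrite invr_ge0 ltW | exact: enorm_ge0].
apply: ae_ge0_le_integral => //.
- by move=> x Ox; exact: weak_Phi_ge0.
- apply: measurable_weak_Phi => //.
  by apply: measurable_funM => //; exact: measurable_cst.
- by move=> x Ox; rewrite mule_ge0 ?lee_fin ?modular_integrand_ge0.
- apply: emeasurable_funM; first exact: measurable_cst.
  exact: measurable_modular_integrand.
- exists N; split => // x /= not_le; apply: contrapT => Nx; apply: not_le => Ox.
  have [_ phi0 _ _ phi_ainc] := phi_ae x Ox Nx.
  by apply: (almost_increasing_contract (ph := phi x)) => //; exact: enorm_ge0.
Qed.

Lemma modular_le_pow (q : R) (g : Rn R n -> 'rV[R]_n) :
  1 <= q -> measurable_fun Om (fun x => enorm (g x)) ->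
  (modular mu Om phi g <= modular mu Om (phi_pow phi q) g + (q - 1)%:E * mu Om)%E.
Proof.
move=> q1 mg; apply: integral_le_poweR_addBr => //.
- exact: measurable_modular_integrand.
- exact: modular_integrand_ge0.
Qed.

Hypothesis finOm : (mu Om < +oo)%E.

Lemma lux_norm_pow_lty (q : R) (g : Rn R n -> 'rV[R]_n) :
  1 <= q -> measurable_fun Om (fun x => enorm (g x)) ->
  (lux_norm mu Om (phi_pow phi q) g < +oo)%E -> (lux_norm mu Om phi g < +oo)%E.
Proof.
move=> q1 mg /ereal_inf_lt[_ [lam [lam_gt0 modq_le1] <-] _].
have [L L0 contract] := modular_contract.
have muOm : mu Om = (fine (mu Om))%:E by rewrite fineK // ge0_fin_numE.
(* [K] is chosen so that [L / K * (1 + (q - 1) |Om|) <= 1] *)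
pose K := Num.max 1 (L * (1 + (q - 1) * fine (mu Om))).
have K1 : 1 <= K by rewrite le_max lexx.
have K0 : 0 < K := lt_le_trans ltr01 K1.
have mg_lam : measurable_fun Om (fun x => enorm (lam^-1 *: g x)).
  under eq_fun do rewrite enormZ.
  by apply: measurable_funM => //; exact: measurable_cst.
apply: le_lt_trans (ltry (lam * K)); apply: ereal_inf_lbound.
exists (lam * K) => //; split; first by rewrite mulr_gt0.
have -> : (fun x => (lam * K)^-1 *: g x) = (fun x => K^-1 *: (lam^-1 *: g x)).
  by apply: funext => x; rewrite scalerA invfM mulrC.
apply: le_trans (contract K _ K1 mg_lam) _.
have mod_le := modular_le_pow q1 mg_lam.
apply: le_trans (lee_wpmul2l _ (le_trans mod_le (leeD2r _ modq_le1))) _.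
  by rewrite lee_fin divr_ge0 // ltW.
rewrite muOm -EFinM -[1%E]/(1%:E) lee_fin mulrAC ler_pdivrMr // mul1r.
by rewrite le_max lexx orbT.
Qed.

Lemma measurable_weak_grad_enorm (v : Rn R n -> R) (g : Rn R n -> 'rV[R]_n) :
  W11_grad mu Om v g -> measurable_fun Om (fun x => enorm (g x)).
Proof.
move=> [_ [g_int _]]; apply: measurable_enorm => j.
by apply/measurable_EFinP; have := measurable_int mu (g_int j).
Qed.

Lemma L1psi_grad_pow (q : R) (v : Rn R n -> R) (g : Rn R n -> 'rV[R]_n) : 1 <= q ->
  L1psi_grad mu Om (phi_pow phi q) v g -> L1psi_grad mu Om phi v g.
Proof.
move=> q1 [W lux]; split => //.
exact: lux_norm_pow_lty q1 (measurable_weak_grad_enorm W) lux.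
Qed.

Lemma energy_le_pow (q : R) (f v : Rn R n -> R) (g : Rn R n -> 'rV[R]_n) : 1 <= q ->
  measurable_fun Om (fun x => enorm (g x)) -> L2 mu Om f -> L2 mu Om v ->
  (\int[mu]_(x in Om) (phi x (enorm (g x)) + ((v x - f x) ^+ 2)%:E) <=
   \int[mu]_(x in Om) (phi_pow phi q x (enorm (g x)) + ((v x - f x) ^+ 2)%:E)
     + (q - 1)%:E * mu Om)%E.
Proof.
move=> q1 mg [mf _] [mv _].
have msq : measurable_fun Om (fun x => ((v x - f x) ^+ 2)%:E).
  by apply/measurable_EFinP; apply: measurable_funX; exact: measurable_funB.
have sq_ge0 x : Om x -> (0 <= ((v x - f x) ^+ 2)%:E)%E by rewrite lee_fin sqr_ge0.
rewrite ge0_integralD //; last 2 first.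
- exact: modular_integrand_ge0.
- exact: measurable_modular_integrand mg.
rewrite ge0_integralD //; last 2 first.
- by move=> x _; exact: poweR_ge0.
- exact: measurableT_comp (measurable_poweR q) (measurable_modular_integrand mg).
by rewrite addeAC leeD2r // modular_le_pow.
Qed.

Lemma Efun_le_pow (q : R) (f v : Rn R n -> R) : 1 <= q -> L2 mu Om f ->
  (Efun mu Om phi f v <= Efun mu Om (phi_pow phi q) f v + (q - 1)%:E * mu Om)%E.
Proof.
move=> q1 f2; have err_fin : ((q - 1)%:E * mu Om)%E \is a fin_num.
  by rewrite fin_numM // ge0_fin_numE.
rewrite -leeBlDr //; apply: le_ereal_inf_tmp => _ [g [gq v2] <-].
rewrite leeBlDr //.
apply: le_trans _ (energy_le_pow q1 (measurable_weak_grad_enorm gq.1) f2 v2).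
apply: ereal_inf_lbound; exists g => //; split => //; exact: L1psi_grad_pow q1 gq.
Qed.

Lemma Efun_pow_lty_admissible (q : R) (f v : Rn R n -> R) : 1 <= q ->
  (Efun mu Om (phi_pow phi q) f v < +oo)%E -> L1psi mu Om phi v /\ L2 mu Om v.
Proof.
move=> q1 /ereal_inf_lt[_ [g [gq v2] _] _]; split => //.
by exists g; exact: L1psi_grad_pow q1 gq.
Qed.

End weak_Phi_function.

Lemma Efun_ge0 (R : realType) (n : nat) (mu : {measure set (Rn R n) -> \bar R})
  (Om : set (Rn R n)) (psi : 'rV[R]_n -> R -> \bar R) (f v : Rn R n -> R) :
  (forall x t, Om x -> 0 <= t -> (0 <= psi x t)%E) -> (0 <= Efun mu Om psi f v)%E.
Proof.
move=> psi_ge0; apply: le_ereal_inf_tmp => _ [g _ <-]; apply: integral_ge0 => x Ox.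
by rewrite adde_ge0 ?lee_fin ?sqr_ge0 // psi_ge0 // enorm_ge0.
Qed.

Lemma Frelax_le_limn_einf (R : realType) (n : nat) (mu : {measure set (Rn R n) -> \bar R})
  (Om : set (Rn R n)) (phi : 'rV[R]_n -> R -> \bar R) (f u : Rn R n -> R)
  (vs : nat -> Rn R n -> R) :
  (forall i, L1psi mu Om phi (vs i) /\ L2 mu Om (vs i)) -> L2_cvg mu Om vs u ->
  (Frelax mu Om phi f u <= limn_einf (fun i => Efun mu Om phi f (vs i)))%E.
Proof. by move=> vs_adm vs_cvg; apply: ereal_inf_lbound; exists vs. Qed.

Section limn_einf_lemmas.
Local Open Scope ereal_scope.
Variable R : realType.
Implicit Types u w : (\bar R)^nat.

Lemma einfs_le_limn_einf u i : einfs u i <= limn_einf u.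
Proof.
rewrite limn_einf_lim; apply: lime_ge; first exact: is_cvg_einfs.
near=> k; apply: nondecreasing_einfs; near: k; exact: nbhs_infty_ge.
Unshelve. all: by end_near. Qed.

Lemma le_limn_einf u w : (forall i, u i <= w i) -> limn_einf u <= limn_einf w.
Proof.
move=> uw; rewrite !limn_einf_lim; apply: lee_lim; try exact: is_cvg_einfs.
apply: nearW => i; apply: le_ereal_inf_tmp => _ [k /= ik <-].
by apply: le_trans (uw k); apply: ereal_inf_lbound; exists k.
Qed.

Lemma limn_einf_le_add u l (e : R^nat) : l \is a fin_num ->
  (forall i, u i <= l + (e i)%:E) -> e @ \oo --> 0%R -> limn_einf u <= l.
Proof.
move=> l_fin ule e_cvg; have : (l + (e i)%:E) @[i --> \oo] --> l + 0%:E.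
  apply: cvgeD; [exact: fin_num_adde_defl | exact: cvg_cst |].
  by apply: cvg_EFin; first exact: nearW.
by rewrite adde0 => /cvg_limn_einf_sup[<- _]; exact: le_limn_einf.
Qed.

Lemma limn_einf_ge0 u : (forall i, 0 <= u i) -> 0 <= limn_einf u.
Proof. by move=> u0; rewrite -(cvg_limn_einf_sup (cvg_cst 0)).1 le_limn_einf. Qed.

Lemma limn_einf_subseq u : limn_einf u \is a fin_num ->
  exists sig : nat -> nat, sig @ \oo --> \oo /\
    forall i, u (sig i) < limn_einf u + (harmonic i)%:E.
Proof.
move=> l_fin.
have near_l i : exists j, (i <= j)%N /\ u j < limn_einf u + (harmonic i)%:E.
  have : einfs u i < limn_einf u + (harmonic i)%:E.
    by apply: le_lt_trans (einfs_le_limn_einf u i) _; rewrite lteDl // lte_fin harmonic_gt0.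
  by move=> /ereal_inf_lt[_ [j /= ij <-] uj]; exists j.
have [sig sig_spec] := choice near_l; exists sig; split => [|i]; last exact: (sig_spec i).2.
apply/cvgnyPge => M; near=> i; apply: leq_trans (sig_spec i).1; near: i.
exact: nbhs_infty_ge.
Unshelve. all: by end_near. Qed.

End limn_einf_lemmas.

Theorem mainTheorem12 (R : realType) (n : nat)
  (mu : {measure set (Rn R n) -> \bar R}) (Om : set (Rn R n))
  (phi : 'rV[R]_n -> R -> \bar R) (f u : Rn R n -> R)
  (us : nat -> Rn R n -> R) (p : nat -> R) :
  (0 < n)%N -> lebesgue_rV mu ->
  open (Om : set 'rV[R]_n) -> connected (Om : set 'rV[R]_n) ->
  bounded_set (Om : set 'rV[R]_n) ->
  weak_Phi mu Om phi -> L2 mu Om f ->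
  L2 mu Om u -> (forall i, L2 mu Om (us i)) -> L2_cvg mu Om us u ->
  (forall i, 1 < p i) -> p @ \oo --> (1 : R) ->
  (Frelax mu Om phi f u <= limn_einf (fun i => Fp mu Om phi f (p i) (us i)))%E.
Proof.
move=> _ leb oOm _ bOm wPhi f2 _ _ us_cvg p_gt1 p_cvg.
have mOm := measurable_open_Rn oOm.
have finOm := lebesgue_rV_bounded_lty leb mOm bOm.
set l := limn_einf _.
have [->|l_neqy] := eqVneq l +oo%E; first exact: leey.
have l_fin : l \is a fin_num.
  rewrite ge0_fin_numE ?ltey // limn_einf_ge0 // => i.
  by apply: Efun_ge0 => x t _ _; exact: poweR_ge0.
have [sig [sig_oo near_l]] := limn_einf_subseq l_fin.
have p_ge1 i : 1 <= p (sig i) := ltW (p_gt1 (sig i)).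
have admissible i : L1psi mu Om phi (us (sig i)) /\ L2 mu Om (us (sig i)).
  apply: (Efun_pow_lty_admissible mOm wPhi finOm (p_ge1 i)); apply: lt_trans (near_l i) _.
  by rewrite -/l -(fineK l_fin) -EFinD ltry.
apply: le_trans (Frelax_le_limn_einf f admissible _) _; first exact: cvg_comp sig_oo us_cvg.
have muOm : mu Om = (fine (mu Om))%:E by rewrite fineK // ge0_fin_numE.
apply: (limn_einf_le_add (e := fun i => harmonic i + (p (sig i) - 1) * fine (mu Om))) => //.
  move=> i; apply: le_trans (Efun_le_pow mOm wPhi finOm _ (p_ge1 i) f2) _.
  rewrite muOm -EFinM EFinD addeA leeD2r //; exact: ltW (near_l i).
rewrite -[0](addr0 0) -[X in _ + X](mul0r (fine (mu Om))) -[X in X * _](subrr 1).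
apply: cvgD; first exact: cvg_harmonic.
apply: cvgM; last exact: cvg_cst.
by apply: cvgB; [exact: cvg_comp sig_oo p_cvg | exact: cvg_cst].
Qed.
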